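(* Let $Q$ be a finite interval order and let $A$ and $B$ be disjoint subsets of the ground set of $Q$. Then there exists a linear extension $L$ of $Q$ such that $a > b$ in $L$ for every $a \in A$ and $b \in B$ with $a$ and $b$ incomparable in $Q$.
   Context: Posets are finite and reflexive. A finite poset $P$ is an interval order if each element $x$ can be assigned a closed bounded real interval $[\ell(x), r(x)]$ such that for distinct $x,y$, $x<y$ in $P$ if and only if $r(x) < \ell(y)$. A linear extension of $P$ is a total order $L$ on the ground set of $P$ such that $x<y$ in $P$ implies $x<y$ in $L$. *)

From mathcomp Require Import all_boot all_order all_algebra.
From mathcomp Require Import reals.
Set Implicit Arguments. Unset Strict Implicit. Unset Printing Implicit Defensive.
Import Order.TTheory GRing.Theory Num.Theory.
Local Open Scope ring_scope.

Definition is_poset (T : finType) (le : rel T) : Prop :=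
  reflexive le /\ antisymmetric le /\ transitive le.

Definition strict (T : finType) (le : rel T) : rel T := fun x y => (x != y) && le x y.

Definition is_interval_order (R : realType) (T : finType) (le : rel T) : Prop :=
  is_poset le /\
  exists (l r : T -> R), (forall x, l x <= r x) /\
    (forall x y, x != y -> (strict le x y <-> r x < l y)).

Definition is_linear_extension (T : finType) (le L : rel T) : Prop :=
  is_poset L /\ (forall x y, L x y || L y x) /\ (forall x y, le x y -> L x y).

Definition incomparable (T : finType) (le : rel T) (x y : T) : Prop :=
  ~~ le x y /\ ~~ le y x.

From mathcomp Require Import all_boot all_order all_algebra.
From mathcomp Require Import reals.
Set Implicit Arguments. Unset Strict Implicit. Unset Printing Implicit Defensive.
Import Order.TTheory GRing.Theory Num.Theory.

(* Let [l x, r x] be interval representations of the elements of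
   the interval order Q.  Place every element of A at the right end r x of its
   interval and every other element at the left end l x; call this real number
   the anchor of x.  If x < y in Q then r x < l y, so anchor x < anchor y.  If
   a in A and b in B are incomparable, then r a < l b fails, so
   anchor b = l b <= r a = anchor a.  Sorting the ground set lexicographically
   by (anchor x, [x \in A]) therefore puts every such b below a (ties are
   broken by membership in A, since b is not in A), and any remaining ties are
   broken by the enumeration rank of x, which makes the order antisymmetric. *)

Lemma lexi_lt_fst (d1 d2 : Order.disp_t) (T1 : orderType d1) (T2 : orderType d2)
    (x1 y1 : T1) (x2 y2 : T2) :
  (x1 < y1)%O -> ((x1, x2) < (y1, y2) :> (T1 *l T2))%O.
Proof. by move=> lt_xy1; rewrite ltxi_pair (ltW lt_xy1) lt_geF. Qed.

Section KeyOrder.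
Variables (d : Order.disp_t) (K : orderType d) (T : finType) (key : T -> K).
Hypothesis key_inj : injective key.

Definition key_order : rel T := fun x y => (key x <= key y)%O.

Lemma key_order_poset : is_poset key_order.
Proof.
split; first by move=> x; exact: lexx.
split; first by move=> x y /le_anti /key_inj.
by move=> y x z; exact: le_trans.
Qed.

Lemma key_order_total x y : key_order x y || key_order y x.
Proof. exact: le_total. Qed.

Lemma strict_key_order x y : strict key_order x y = (key x < key y)%O.
Proof. by rewrite lt_def /strict (inj_eq key_inj) eq_sym. Qed.

Lemma key_order_extension (le : rel T) :
  reflexive le -> (forall x y, strict le x y -> (key x < key y)%O) ->
  is_linear_extension le key_order.
Proof.
move=> le_refl key_mono; split; first exact: key_order_poset.
split; first exact: key_order_total.
move=> x y le_xy; have [-> | neq_xy] := eqVneq x y; first exact: lexx.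
by apply: ltW; apply: key_mono; rewrite /strict neq_xy.
Qed.

End KeyOrder.

Definition tiebreak (d : Order.disp_t) (K : orderType d) (T : finType)
  (g : T -> K) (x : T) : K *l 'I_#|T| := (g x, enum_rank x).

Lemma tiebreak_inj (d : Order.disp_t) (K : orderType d) (T : finType)
  (g : T -> K) : injective (tiebreak g).
Proof. by move=> x y [_ /enum_rank_inj]. Qed.

Section Anchor.
Local Open Scope ring_scope.
Variables (R : realType) (T : finType) (le : rel T) (l r : T -> R) (A : {set T}).
Hypothesis l_le_r : forall x, l x <= r x.
Hypothesis interval_le : forall x y, x != y -> (strict le x y <-> r x < l y).

Definition anchor (x : T) : R := if x \in A then r x else l x.

Lemma anchor_in_interval x : l x <= anchor x <= r x.
Proof. by rewrite /anchor; case: ifP => _; rewrite lexx l_le_r. Qed.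

Lemma anchor_lt x y : strict le x y -> anchor x < anchor y.
Proof.
move=> lt_xy; have /andP [neq_xy _] := lt_xy.
have /andP [_ anchor_x_le] := anchor_in_interval x.
have /andP [anchor_y_ge _] := anchor_in_interval y.
by apply: le_lt_trans anchor_x_le (lt_le_trans _ anchor_y_ge); apply/interval_le.
Qed.

Lemma anchor_incomparable a b :
  reflexive le -> a \in A -> b \notin A -> incomparable le a b ->
  anchor b <= anchor a.
Proof.
move=> le_refl aA bNA [nle_ab _].
have neq_ab : a != b by apply: contraNneq nle_ab => ->.
rewrite /anchor aA (negbTE bNA) leNgt; apply/negP => /(interval_le neq_ab).
by rewrite /strict (negbTE nle_ab) andbF.
Qed.

End Anchor.

Theorem lemma1 (R : realType) (T : finType) (le : rel T) (A B : {set T}) :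
  is_interval_order R le ->
  [disjoint A & B] ->
  exists L : rel T, is_linear_extension le L /\
    (forall a b, a \in A -> b \in B -> incomparable le a b -> strict L b a).
Proof.
move=> [[le_refl _] [l [r [l_le_r interval_le]]]] disjAB.
pose key := tiebreak (fun x => (anchor l r A x, x \in A) : R *l bool).
have key_inj : injective key by exact: tiebreak_inj.
exists (key_order key); split.
  apply: key_order_extension => // x y lt_xy.
  by do 2 apply: lexi_lt_fst; exact: anchor_lt lt_xy.
move=> a b aA bB incomp_ab; rewrite strict_key_order //.
have bNA : b \notin A by apply: contraTN bB => bA; rewrite (disjointFr disjAB bA).
apply: lexi_lt_fst; rewrite ltxi_pair aA (negbTE bNA) ltEbool implybT andbT.
exact (anchor_incomparable interval_le le_refl aA bNA incomp_ab).
Qed.
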